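(* Let $f\in C^1(\mathbb{R})$ and consider the primary matrix function $f:\mathrm{Sym}(n)\to\mathrm{Sym}(n)$. Consider the conditions: (H-mon) $\langle f(B)-f(A),B-A\rangle>0$ for all $A\neq B\in\mathrm{Sym}(n)$; (O-mon) for all $A,B\in\mathrm{Sym}(n)$: if $B-A$ is positive definite then $f(B)-f(A)$ is positive definite; (S-mon) for all $a,b\in\mathbb{R}$: $b>a$ implies $f(b)>f(a)$; (P-mon) $\langle f(A+H)-f(A),H\rangle>0$ for all $H\in\mathrm{PSym}(n)$ and $A\in\mathrm{Sym}(n)$. Then (O-mon) $\Rightarrow$ (S-mon) $\Leftrightarrow$ (H-mon) $\Leftrightarrow$ (P-mon), and these are the only implications that hold in general; in particular (S-mon) does not in general imply (O-mon).
   Context: $\mathrm{Sym}(n)$ is the space of real symmetric $n\times n$ matrices with inner product $\langle X,Y\rangle=\mathrm{tr}(X^TY)$, and $\mathrm{PSym}(n)$ is the set of symmetric positive definite matrices. The primary matrix function is $f(A)=Q^T\mathrm{diag}(f(\lambda_1),\dots,f(\lambda_n))Q$ whenever $A=Q^T\mathrm{diag}(\lambda_1,\dots,\lambda_n)Q$ with $Q\in\mathrm{O}(n)$. *)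

From HB Require Import structures.
From mathcomp Require Import all_boot all_order all_algebra.
From mathcomp Require Import all_classical all_reals all_analysis.
Set Implicit Arguments. Unset Strict Implicit. Unset Printing Implicit Defensive.
Import Order.TTheory GRing.Theory Num.Theory numFieldNormedType.Exports.
Local Open Scope classical_set_scope.
Local Open Scope ring_scope.

Section Defs.
Variable R : realType.

Definition C1 (f : R -> R) : Prop :=
  (forall x : R, derivable f x 1) /\ continuous (fun x : R => derive1 f x).

Definition symmx n (A : 'M[R]_n) : Prop := A^T = A.

Definition orthmx n (Q : 'M[R]_n) : Prop := Q^T *m Q = 1%:M.

Definition posdefmx n (A : 'M[R]_n) : Prop :=
  symmx A /\ forall x : 'cV[R]_n, x != 0 -> 0 < (x^T *m A *m x) 0 0.

Definition frob n (X Y : 'M[R]_n) : R := \tr (X^T *m Y).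

(* Primary matrix function: f(A) = Q^T diag(f(l_1),...,f(l_n)) Q whenever
   A = Q^T diag(l_1,...,l_n) Q with Q orthogonal (a matrix chosen among
   those arising from some such decomposition). *)
Definition primary_mx n (f : R -> R) (A : 'M[R]_n) : 'M[R]_n :=
  xget 0 [set M : 'M[R]_n | exists (Q : 'M[R]_n) (d : 'rV[R]_n),
     orthmx Q /\ A = Q^T *m diag_mx d *m Q /\
     M = Q^T *m diag_mx (map_mx f d) *m Q].

Definition Hmon n (f : R -> R) : Prop :=
  forall A B : 'M[R]_n, symmx A -> symmx B -> A != B ->
    0 < frob (primary_mx f B - primary_mx f A) (B - A).

Definition Omon n (f : R -> R) : Prop :=
  forall A B : 'M[R]_n, symmx A -> symmx B -> posdefmx (B - A) ->
    posdefmx (primary_mx f B - primary_mx f A).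

Definition Smon (f : R -> R) : Prop := forall a b : R, a < b -> f a < f b.

Definition Pmon n (f : R -> R) : Prop :=
  forall A H : 'M[R]_n, symmx A -> posdefmx H ->
    0 < frob (primary_mx f (A + H) - primary_mx f A) H.

End Defs.

From HB Require Import structures.
From mathcomp Require Import all_boot all_order all_algebra.
From mathcomp Require Import all_classical all_reals all_analysis.
From mathcomp Require Import complex sesquilinear spectral.
From mathcomp Require Import ring lra.
Import Order.TTheory GRing.Theory Num.Theory numFieldNormedType.Exports.
Local Open Scope ring_scope.
Set Implicit Arguments. Unset Strict Implicit. Unset Printing Implicit Defensive.

(* Write A = P^T diag(a) P and B = Q^T diag(b) Q with P, Q orthogonal (spectral
   theorem) and put W = Q P^T.  Then
     <f(B) - f(A), B - A> = sum_(i,j) W_ij^2 (f(b_i) - f(a_j)) (b_i - a_j),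
   which for strictly increasing f is positive unless b_i = a_j whenever
   W_ij <> 0, i.e. unless A = B.  Conversely, on scalar matrices a I, b I each
   matrix condition reduces to f(a) < f(b).  Finally x |-> x^3 is strictly
   increasing but not operator monotone: for A = [[1,2],[2,1]] (padded by 0)
   and B = A + diag(1,3,1,...,1), x^T (B^3 - A^3) x = -1 at x = (2,-1,0,...). *)

Section SymmetricSpectral.
Variable R : realType.

Lemma rowmx_sqr_ge0 n (w : 'rV[R]_n) : 0 <= (w *m w^T) 0 0.
Proof. by rewrite mxE sumr_ge0 // => i _; rewrite mxE -expr2 sqr_ge0. Qed.

Lemma rowmx_sqr_gt0 n (w : 'rV[R]_n) : w != 0 -> 0 < (w *m w^T) 0 0.
Proof.
move=> w0; have w2_ge0 i : 0 <= w 0 i * w^T i 0 by rewrite mxE -expr2 sqr_ge0.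
rewrite lt0r rowmx_sqr_ge0 andbT mxE psumr_eq0 //.
apply: contra w0 => /allP w2_0; apply/eqP/rowP => i.
have /implyP := w2_0 i (mem_index_enum i).
by rewrite mxE -expr2 sqrf_eq0 => /(_ isT) /eqP ->; rewrite mxE.
Qed.

Lemma posdefmx_1_add_gram n (c : R) (u : 'cV[R]_n) : 0 <= c ->
  posdefmx (1%:M + c *: (u *m u^T)).
Proof.
move=> c_ge0; split=> [|x x0].
  by rewrite /symmx linearD /= linearZ /= trmx_mul trmxK trmx1.
rewrite mulmxDr mulmx1 mulmxDl -scalemxAr -scalemxAl !mulmxA.
have -> : x^T *m u *m u^T *m x = (x^T *m u) *m (x^T *m u)^T by rewrite trmx_mul trmxK mulmxA.
rewrite mxE [X in _ + X]mxE ltr_wpDr ?mulr_ge0 ?rowmx_sqr_ge0 //.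
by have := rowmx_sqr_gt0 (w := x^T); rewrite trmxK trmx_eq0; apply.
Qed.

Lemma symmx_real_eigenvector n (A : 'M[R]_n.+1) : symmx A ->
  exists l : R, exists2 v : 'rV_n.+1, v != 0 & v *m A = l *: v.
Proof.
move=> As; pose AC := map_mx (real_complex R) A.
have AC_herm : AC \is hermsymmx.
  apply: realsym_hermsym.
    by apply/is_hermitianmxP; rewrite expr0 scale1r map_mx_id // /AC map_trmx As.
  by apply/mxOverP => i j; rewrite mxE; apply/complex_realP; exists (A i j).
have /orthomx_spectralP AC_diag := hermitian_normalmx AC_herm.
set P := spectralmx AC in AC_diag; set sp := spectral_diag AC in AC_diag.
have P_unit : P \in unitmx := spectral_unit AC.
have /complex_realP [l spl] : sp 0 0 \is Num.real.
  by move/mxOverP: (hermitian_spectral_diag_real AC_herm); apply.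
have : eigenvalue AC (sp 0 0).
  apply/eigenvalueP; exists (row 0 P).
    have PAC : P *m AC = diag_mx sp *m P.
      by rewrite {1}AC_diag !mulmxA mulmxV // mul1mx.
    by rewrite -row_mul PAC mul_diag_mx; apply/rowP => j; rewrite !mxE.
  apply: contraTneq P_unit => P0; apply/negP => /mulmxV/(congr1 (row 0)).
  rewrite row_mul P0 mul0mx => /rowP/(_ 0); rewrite !mxE eqxx /=.
  by move/eqP; rewrite eq_sym oner_eq0.
rewrite eigenvalue_root_char /AC -map_char_poly spl fmorph_root.
by rewrite -eigenvalue_root_char => /eigenvalueP [v vA v0]; exists l, v.
Qed.

Lemma householder_reflection n (v : 'rV[R]_n.+1) : v *m v^T = 1%:M ->
  exists H : 'M[R]_n.+1, symmx H /\ H *m H = 1%:M /\ row 0 H = v.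
Proof.
move=> vv; pose e : 'rV[R]_n.+1 := 'e_0.
have [->|ve] := eqVneq v e; first by exists 1%:M; rewrite /symmx trmx1 mulmx1 rowE mulmx1.
have ee : e *m e^T = 1%:M by rewrite /e trmx_delta -colE [LHS]mx11_scalar !mxE.
have ev : e *m v^T = (v 0 0)%:M.
  by rewrite /e -rowE [LHS]mx11_scalar !mxE.
have ve' : v *m e^T = (v 0 0)%:M by rewrite -[LHS]trmxK trmx_mul trmxK ev tr_scalar_mx.
pose w := v - e; pose s := 2 - 2 * v 0 0.
have ww : w *m w^T = s%:M.
  rewrite /w linearB /= mulmxBl !mulmxBr vv ev ve' ee.
  by apply/matrixP => i j; rewrite !mxE /s; ring.
have s0 : s != 0.
  by have := rowmx_sqr_gt0 (w := w); rewrite subr_eq0 ww mxE eqxx mulr1n lt0r => /(_ ve)/andP[].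
(* the reflection across the hyperplane orthogonal to [v - e] swaps [v] and [e] *)
pose c := 2 / s.
have cs : c * (v 0 0 - 1) = -1 by rewrite /c /s; field; move: s0; rewrite /s.
have cc : c * c * s = c + c by rewrite /c; field.
have wE : w = v - e by [].
clearbody w c s.
have KK : (w^T *m w) *m (w^T *m w) = s *: (w^T *m w).
  by rewrite mulmxA -[w^T *m w *m w^T]mulmxA ww mul_mx_scalar -scalemxAl.
exists (1%:M - c *: (w^T *m w)); split; last split.
- by rewrite /symmx linearB /= linearZ /= trmx_mul trmxK trmx1.
- rewrite mulmxBl !mulmxBr mul1mx mulmx1 -!scalemxAl -!scalemxAr mul1mx KK.
  rewrite !scalerA cc scalerDl; move: (c *: _) => x.
  by apply/matrixP => i j; rewrite !mxE; ring.
rewrite rowE mulmxBr mulmx1 -scalemxAr mulmxA {1}wE linearB /= mulmxBr ev ee.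
rewrite -(raddfB (@scalar_mx R _)) mul_scalar_mx scalerA cs.
by rewrite scaleN1r opprK wE addrC subrK.
Qed.

Lemma symmx_deflation n (A : 'M[R]_(1 + n)) : symmx A ->
  exists (H : 'M[R]_(1 + n)) (l : R) (A' : 'M[R]_n),
    [/\ symmx H, H *m H = 1%:M, symmx A' & H *m A *m H = block_mx l%:M 0 0 A'].
Proof.
move=> As; have [l [u u0 uA]] := symmx_real_eigenvector As.
pose s := (u *m u^T) 0 0; have s_gt0 : 0 < s := rowmx_sqr_gt0 u0.
pose v := (Num.sqrt s)^-1 *: u.
have vv : v *m v^T = 1%:M.
  rewrite /v linearZ /= -scalemxAl -scalemxAr scalerA [u *m _]mx11_scalar -/s.
  by rewrite -mul_scalar_mx -scalar_mxM -invfM -expr2 sqr_sqrtr ?ltW // mulVf ?lt0r_neq0.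
have vA : v *m A = l *: v by rewrite /v -scalemxAl uA !scalerA mulrC.
have [H [Hs [HH H0]]] := householder_reflection vv.
pose A1 : 'M[R]_(1 + n) := H *m A *m H.
have A1s : symmx A1 by rewrite /symmx /A1 !trmx_mul Hs As mulmxA.
have A1_row0 (j : 'I_(1 + n)) : A1 0 j = l * (0 == j)%:R.
  have : row 0 A1 = l *: row 0 1%:M.
    by rewrite /A1 !row_mul H0 vA -scalemxAl -H0 -row_mul HH.
  by move/rowP/(_ j); rewrite !mxE.
exists H, l, (drsubmx A1); split=> //; first by rewrite /symmx trmx_drsub A1s.
have lshift0 : lshift n (0 : 'I_1) = 0 by apply/val_inj.
rewrite -/A1 -[LHS]submxK; clearbody A1; congr block_mx; apply/matrixP => i j; rewrite !ord1 !mxE.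
- by rewrite lshift0 A1_row0 mulr1.
- by rewrite lshift0 A1_row0 mulr0.
- by rewrite -A1s mxE lshift0 A1_row0 mulr0.
Qed.

Theorem symmx_orthogonal_diag n (A : 'M[R]_n) : symmx A ->
  exists (Q : 'M[R]_n) (d : 'rV[R]_n), orthmx Q /\ A = Q^T *m diag_mx d *m Q.
Proof.
elim: n A => [|n IH] A As.
  by exists 1%:M, 0; split; [rewrite /orthmx trmx1 mulmx1 | apply/matrixP => [] []].
move: A As; rewrite -[n.+1]/(1 + n)%N => A As.
have [H [l [A' [Hs HH A's HAH]]]] := symmx_deflation As.
have [Q' [d' [Q'o A'E]]] := IH A' A's.
pose Q : 'M[R]_(1 + n) := block_mx 1%:M 0 0 Q' *m H.
exists Q, (row_mx l%:M d'); split.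
  rewrite /orthmx /Q trmx_mul tr_block_mx !trmx0 trmx1 Hs !mulmxA -(mulmxA H).
  rewrite mulmx_block !mulmx0 !mul0mx !mulmx1 !addr0 !add0r Q'o -scalar_mx_block.
  by rewrite mulmx1 HH.
have -> : A = H *m (block_mx l%:M 0 0 A') *m H.
  by rewrite -HAH !mulmxA HH mul1mx -mulmxA HH mulmx1.
rewrite /Q diag_mx_row trmx_mul tr_block_mx !trmx0 trmx1 Hs !mulmxA.
congr (_ *m _); rewrite -!mulmxA; congr (_ *m _); rewrite !mulmxA.
rewrite !mulmx_block !mulmx0 !mul0mx !mulmx1 !mul1mx !addr0 !add0r -A'E.
by rewrite mul0mx; congr block_mx; apply/matrixP => i j; rewrite !ord1 !mxE.
Qed.

End SymmetricSpectral.

Section PrimaryMx.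
Variable R : realType.
Implicit Types (f : R -> R).

Lemma primary_mxP n f (A : 'M[R]_n) : symmx A ->
  exists (Q : 'M[R]_n) (d : 'rV[R]_n), [/\ orthmx Q, A = Q^T *m diag_mx d *m Q
    & primary_mx f A = Q^T *m diag_mx (map_mx f d) *m Q].
Proof.
move=> /symmx_orthogonal_diag [Q [d [Qo AE]]].
rewrite /primary_mx; set S := (X in xget _ X).
have : S (xget 0 S) by apply: xgetPex; exists (Q^T *m diag_mx (map_mx f d) *m Q), Q, d.
by move=> [Q' [d' [Q'o [AE' ->]]]]; exists Q', d'.
Qed.

Lemma primary_mx_scalar n f (a : R) : primary_mx f (a%:M : 'M[R]_n) = (f a)%:M.
Proof.
have [Q [d [Qo aE ->]]] := primary_mxP f (tr_scalar_mx n a).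
have Qo' := mulmx1C Qo.
have da : diag_mx d = a%:M.
  have : Q *m a%:M *m Q^T = Q *m (Q^T *m diag_mx d *m Q) *m Q^T by rewrite -aE.
  rewrite mul_mx_scalar -scalemxAl Qo' scalemx1 => ->.
  by rewrite !mulmxA Qo' mul1mx -mulmxA Qo' mulmx1.
have -> : diag_mx (map_mx f d) = (f a)%:M.
  apply/matrixP => i j; have /matrixP/(_ i i) := da.
  by rewrite !mxE eqxx !mulr1n => <-.
by rewrite mul_mx_scalar -scalemxAl Qo scalemx1.
Qed.

Lemma primary_mx_cube n (A : 'M[R]_n) : symmx A ->
  primary_mx (fun x => x ^+ 3) A = A *m A *m A.
Proof.
move=> As; have [Q [d [Qo AE ->]]] := primary_mxP (fun x => x ^+ 3) As.
have -> : diag_mx (map_mx (fun x => x ^+ 3) d) = diag_mx d *m diag_mx d *m diag_mx d.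
  by rewrite !mulmx_diag; congr diag_mx; apply/rowP => j; rewrite !mxE exprSr expr2.
rewrite AE !mulmxA; congr (_ *m _).
by rewrite -!(mulmxA _ Q) (mulmx1C Qo) !mulmx1.
Qed.

End PrimaryMx.

Section FrobeniusConjDiag.
Variables (R : realType) (n : nat).
Implicit Types (P Q W : 'M[R]_n) (u v : 'rV[R]_n).

Lemma mxtrace_mul_conj_diag P Q u v :
  \tr ((Q^T *m diag_mx u *m Q) *m (P^T *m diag_mx v *m P)) =
  \sum_i \sum_j u 0 i * v 0 j * (Q *m P^T) i j ^+ 2.
Proof.
rewrite -!mulmxA mxtrace_mulC !mulmxA.
have -> : diag_mx u *m Q *m P^T *m diag_mx v *m P *m Q^T =
    diag_mx u *m (Q *m P^T) *m diag_mx v *m (Q *m P^T)^T.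
  by rewrite trmx_mul trmxK !mulmxA.
apply: eq_bigr => i _; rewrite mxE; apply: eq_bigr => j _.
by rewrite mul_mx_diag mul_diag_mx !mxE; ring.
Qed.

Lemma mxtrace_mul_conj_diag_orth Q u v : orthmx Q ->
  \tr ((Q^T *m diag_mx u *m Q) *m (Q^T *m diag_mx v *m Q)) = \sum_i u 0 i * v 0 i.
Proof.
move=> /mulmx1C Qo; rewrite -!mulmxA mxtrace_mulC !mulmxA -(mulmxA _ Q) Qo mulmx1.
rewrite -(mulmxA _ Q) Qo mulmx1 mulmx_diag mxtrace_diag.
by apply: eq_bigr => i _; rewrite mxE.
Qed.

Lemma orthmx_row_sqr_sum W i : W *m W^T = 1%:M -> \sum_j W i j ^+ 2 = 1.
Proof.
move=> /matrixP/(_ i i); rewrite !mxE eqxx mulr1n => <-.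
by apply: eq_bigr => j _; rewrite mxE expr2.
Qed.

Lemma frob_sub_conj_diag P Q (a a' b b' : 'rV[R]_n) : orthmx P -> orthmx Q ->
  frob (Q^T *m diag_mx b' *m Q - P^T *m diag_mx a' *m P)
       (Q^T *m diag_mx b *m Q - P^T *m diag_mx a *m P) =
  \sum_i \sum_j (Q *m P^T) i j ^+ 2 * ((b' 0 i - a' 0 j) * (b 0 i - a 0 j)).
Proof.
move=> Po Qo; set W := Q *m P^T.
have WWt : W *m W^T = 1%:M.
  by rewrite /W trmx_mul trmxK !mulmxA -(mulmxA Q) Po mulmx1 (mulmx1C Qo).
have WtW : W^T *m W^T^T = 1%:M by rewrite trmxK; apply: mulmx1C.
have conj_sym Z (d : 'rV[R]_n) : (Z^T *m diag_mx d *m Z)^T = Z^T *m diag_mx d *m Z.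
  by rewrite !trmx_mul trmxK tr_diag_mx mulmxA.
rewrite /frob [(_ - _)^T]linearB /= !conj_sym mulmxBl !mulmxBr.
rewrite !linearB /= !mxtrace_mul_conj_diag_orth // !mxtrace_mul_conj_diag -/W.
have -> : P *m Q^T = W^T by rewrite /W trmx_mul trmxK.
have -> : \sum_i b' 0 i * b 0 i = \sum_i \sum_j b' 0 i * b 0 i * W i j ^+ 2.
  by apply: eq_bigr => i _; rewrite -mulr_sumr orthmx_row_sqr_sum // mulr1.
have -> : \sum_i a' 0 i * a 0 i = \sum_i \sum_j a' 0 j * a 0 j * W i j ^+ 2.
  rewrite exchange_big; apply: eq_bigr => j _.
  rewrite -mulr_sumr -[LHS]mulr1 -(orthmx_row_sqr_sum j WtW).
  by congr (_ * _); apply: eq_bigr => i _; rewrite mxE.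
have -> : \sum_i \sum_j a' 0 i * b 0 j * W^T i j ^+ 2 =
          \sum_i \sum_j a' 0 j * b 0 i * W i j ^+ 2.
  by rewrite exchange_big; apply: eq_bigr => i _; apply: eq_bigr => j _; rewrite mxE.
rewrite -!sumrN -!big_split; apply: eq_bigr => i _.
by rewrite -!sumrN -!big_split; apply: eq_bigr => j _ /=; ring.
Qed.

End FrobeniusConjDiag.

Section Monotone.
Variable R : realType.
Implicit Types (f : R -> R).

Lemma conj_diag_eq n (P Q : 'M[R]_n) (a b : 'rV[R]_n) : orthmx P -> orthmx Q ->
  (forall i j, (Q *m P^T) i j != 0 -> b 0 i = a 0 j) ->
  P^T *m diag_mx a *m P = Q^T *m diag_mx b *m Q.
Proof.
move=> Po Qo; set W := Q *m P^T => ab.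
have WE : W = Q *m P^T by []; clearbody W.
have WD : W *m diag_mx a = diag_mx b *m W.
  apply/matrixP => i j; rewrite mul_mx_diag mul_diag_mx !mxE.
  by have [->|/ab->] := eqVneq (W i j) 0; rewrite ?mulr0 ?mul0r // mulrC.
have := congr1 (fun M => Q^T *m M *m P) WD; rewrite WE.
by rewrite !mulmxA Qo mul1mx -!mulmxA Po mulmx1.
Qed.

Lemma Smon_mul_subr_gt0 f x y : Smon f -> x != y -> 0 < (f x - f y) * (x - y).
Proof.
move=> Sf; case: (ltgtP x y) => // [xy|yx] _; last by rewrite mulr_gt0 ?subr_gt0 ?Sf.
by rewrite -mulrNN !opprB mulr_gt0 ?subr_gt0 ?Sf.
Qed.

Lemma Smon_Hmon n f : Smon f -> Hmon n f.
Proof.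
move=> Sf A B As Bs; apply: contra_neqT; rewrite -leNgt.
have [P [a [Po AE ->]]] := primary_mxP f As.
have [Q [b [Qo BE ->]]] := primary_mxP f Bs.
rewrite AE BE frob_sub_conj_diag //; set W := Q *m P^T.
set F := fun i j => W i j ^+ 2 * ((map_mx f b 0 i - map_mx f a 0 j) * (b 0 i - a 0 j)).
have F_ge0 i j : 0 <= F i j.
  rewrite /F mulr_ge0 ?sqr_ge0 // !mxE.
  have [->|ab] := eqVneq (b 0 i) (a 0 j); first by rewrite !subrr mulr0.
  exact/ltW/Smon_mul_subr_gt0.
move=> F_le0.
have F_eq0 i j : F i j = 0.
  have Fi_ge0 i' : 0 <= \sum_j' F i' j' by apply: sumr_ge0.
  have sumF0 : \sum_i \sum_j F i j = 0 by apply/eqP; rewrite eq_le F_le0 sumr_ge0.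
  have Fi0 := @psumr_eq0P _ _ predT _ (fun i' _ => Fi_ge0 i') sumF0 i isT.
  exact: @psumr_eq0P _ _ predT _ (fun j' _ => F_ge0 i j') Fi0 j isT.
apply: conj_diag_eq => // i j; apply: contraNeq => ab.
move: (F_eq0 i j); rewrite /F !mxE => /eqP.
by rewrite mulf_eq0 (gt_eqF (Smon_mul_subr_gt0 Sf ab)) orbF sqrf_eq0.
Qed.

End Monotone.

Section PositiveDimension.
Variables (R : realType) (n : nat).
Hypothesis n_gt0 : (0 < n)%N.
Implicit Types (f : R -> R) (a b : R).

Let i0 : 'I_n := Ordinal n_gt0.

Let e0 : 'cV[R]_n := delta_mx i0 0.

Let e0_neq0 : e0 != 0.
Proof.
by apply/negP => /eqP/matrixP/(_ i0 0); rewrite !mxE !eqxx => /eqP; rewrite oner_eq0.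
Qed.

Lemma scalar_mx_inj a b : (a%:M : 'M[R]_n) = b%:M -> a = b.
Proof. by move/matrixP/(_ i0 i0); rewrite !mxE eqxx !mulr1n. Qed.

Lemma frob_scalar_mx a b : frob (a%:M : 'M[R]_n) b%:M = (a * b) *+ n.
Proof. by rewrite /frob tr_scalar_mx -scalar_mxM mxtrace_scalar. Qed.

Lemma posdefmx_scalar a : posdefmx (a%:M : 'M[R]_n) <-> 0 < a.
Proof.
split=> [[_ /(_ e0 e0_neq0)]|a_gt0].
  by rewrite /e0 trmx_delta -rowE -colE !mxE eqxx mulr1n.
split=> [|x x0]; first exact: tr_scalar_mx.
rewrite mul_mx_scalar -scalemxAl mxE mulr_gt0 //.
by have := rowmx_sqr_gt0 (w := x^T); rewrite trmxK trmx_eq0; apply.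
Qed.

Lemma Omon_Smon f : Omon n f -> Smon f.
Proof.
move=> Of a b ab; have := Of a%:M b%:M (tr_scalar_mx n a) (tr_scalar_mx n b).
rewrite !primary_mx_scalar -!(raddfB (@scalar_mx _ n)) !posdefmx_scalar !subr_gt0; exact.
Qed.

Lemma Hmon_Smon f : Hmon n f -> Smon f.
Proof.
move=> Hf a b ab.
have ab_mx : (a%:M : 'M[R]_n) != b%:M.
  by apply/eqP => /scalar_mx_inj eq_ab; rewrite eq_ab ltxx in ab.
have := Hf a%:M b%:M (tr_scalar_mx n a) (tr_scalar_mx n b) ab_mx.
rewrite !primary_mx_scalar -!(raddfB (@scalar_mx _ n)) frob_scalar_mx pmulrn_lgt0 //.
by rewrite pmulr_lgt0 ?subr_gt0.
Qed.

Lemma Pmon_Smon f : Pmon n f -> Smon f.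
Proof.
move=> Pf a b ab; have bap : posdefmx ((b - a)%:M : 'M[R]_n).
  by rewrite posdefmx_scalar subr_gt0.
have := Pf a%:M _ (tr_scalar_mx n a) bap.
rewrite -(raddfD (@scalar_mx _ n)) subrKC !primary_mx_scalar.
by rewrite -(raddfB (@scalar_mx _ n)) frob_scalar_mx pmulrn_lgt0 // pmulr_lgt0 ?subr_gt0.
Qed.

Lemma posdefmx_neq0 (H : 'M[R]_n) : posdefmx H -> H != 0.
Proof.
move=> [_ /(_ e0 e0_neq0)]; apply: contraTneq => ->.
by rewrite mulmx0 mul0mx mxE ltxx.
Qed.

Lemma Hmon_Pmon f : Hmon n f -> Pmon n f.
Proof.
move=> Hf A H As Hp; have AH : A != A + H.
  by apply: contra_neq (posdefmx_neq0 Hp) => AAH; apply: (addrI A); rewrite addr0 -AAH.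
have AHs : symmx (A + H) by rewrite /symmx linearD /= As (proj1 Hp).
by have := Hf A (A + H) As AHs AH; rewrite addrAC subrr add0r.
Qed.

End PositiveDimension.

Section Cube.
Variable R : realType.

Lemma Smon_cube : Smon (fun x : R => x ^+ 3).
Proof.
move=> a b ab /=; have ba2_gt0 : 0 < (b - a) ^+ 2 by rewrite exprn_gt0 // subr_gt0.
have -> : b ^+ 3 = a ^+ 3 + (b - a) * ((a + b) ^+ 2 + a ^+ 2 + b ^+ 2) / 2 by field.
by rewrite ltrDl divr_gt0 // mulr_gt0 ?subr_gt0 //; nra.
Qed.

Lemma C1_cube : C1 (fun x : R => x ^+ 3).
Proof.
split=> [x|]; first exact: exprn_derivable.
have -> : derive1 (fun x : R => x ^+ 3) = fun x => 3%:R *: x ^+ 2.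
  by apply/funext => x; rewrite exp_derive1.
move=> x; apply: (@continuousZ _ _ _ (fun=> 3%:R) (fun x : R => x ^+ 2)).
  exact: cst_continuous.
exact: exprn_continuous.
Qed.

End Cube.

Section CubeCounterexample.
Variables (R : realType) (m : nat).

Let i0 : 'I_m.+2 := 0.
Let i1 : 'I_m.+2 := lift 0 0.
Let e (i : 'I_m.+2) : 'cV[R]_m.+2 := delta_mx i 0.
Let E (i j : 'I_m.+2) : 'M[R]_m.+2 := delta_mx i j.

Let i10 : (i1 == i0) = false. Proof. by []. Qed.
Let i01 : (i0 == i1) = false. Proof. by []. Qed.

Lemma not_Omon_cube : ~ Omon m.+2 (fun x : R => x ^+ 3).
Proof.
pose A := E i0 i0 + 2%:R *: E i0 i1 + 2%:R *: E i1 i0 + E i1 i1.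
pose H := 1%:M + 2%:R *: E i1 i1.
pose B := A + H.
pose x := 2%:R *: e i0 - e i1.
have As : symmx A.
  rewrite /symmx /A !linearD /= !linearZ /= /E !trmx_delta.
  by congr (_ + _); rewrite -!addrA [X in _ + X]addrC.
have Hp : posdefmx H.
  rewrite /H.
  have -> : E i1 i1 = e i1 *m (e i1)^T by rewrite /e /E trmx_delta mul_delta_mx.
  by apply: posdefmx_1_add_gram; rewrite ler0n.
have Bs : symmx B by rewrite /symmx /B linearD /= As (proj1 Hp).
have Ax : A *m x = 3%:R *: e i1.
  rewrite /A /x /E /e !mulmxDl !mulmxBr -!scalemxAl -!scalemxAr !mul_delta_mx_cond.
  rewrite i01 i10 !eqxx !mulr0n !mulr1n.
  by apply/matrixP => i j; rewrite !mxE; ring.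
have Bx : B *m x = 2%:R *: e i0.
  rewrite /B mulmxDl Ax /H mulmxDl mul1mx /x /e /E mulmxBr -!scalemxAl -!scalemxAr.
  rewrite !mul_delta_mx_cond i10 eqxx mulr0n mulr1n.
  by apply/matrixP => i j; rewrite !mxE; ring.
have x0 : x != 0.
  apply/negP => /eqP/matrixP/(_ i0 0); rewrite /x /e !mxE eqxx i01 /= => /eqP.
  by rewrite mulr1 subr0 pnatr_eq0.
have cube_form M : symmx M -> x^T *m (M *m M *m M) *m x = (M *m x)^T *m M *m (M *m x).
  by move=> Ms; rewrite trmx_mul Ms !mulmxA.
clearbody x.
have BA : B - A = H by rewrite /B addrAC subrr add0r.
move=> /(_ A B As Bs); rewrite BA => /(_ Hp) [_ /(_ x x0)].
rewrite !primary_mx_cube // mulmxBr mulmxBl !cube_form // Bx Ax !linearZ /=.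
rewrite -!scalemxAl /e !trmx_delta -!rowE -!colE !mxE !eqxx i01 /=.
apply/negP; rewrite -leNgt; lra.
Qed.

End CubeCounterexample.

Theorem proposition4p1 (R : realType) :
  (forall (n : nat) (f : R -> R), (0 < n)%N -> C1 f ->
     (Omon n f -> Smon f) /\ (Smon f <-> Hmon n f) /\ (Smon f <-> Pmon n f)) /\
  (forall n : nat, (1 < n)%N ->
     exists f : R -> R, C1 f /\ Smon f /\ ~ Omon n f).
Proof.
split=> [n f n_gt0 _ | [|[|m]] // _].
  have Smon_Pmon (Sf : Smon f) : Pmon n f := Hmon_Pmon n_gt0 (Smon_Hmon Sf).
  split; first exact: Omon_Smon.
  by split; split; [exact: Smon_Hmon | exact: Hmon_Smon | exact: Smon_Pmon | exact: Pmon_Smon].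
exists (fun x : R => x ^+ 3).
by split; [exact: C1_cube | split; [exact: Smon_cube | exact: not_Omon_cube]].
Qed.
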